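(* Let $p$ be a prime and let $G$ be a finite $p$-group such that $Z(G)$ is not contained in $G'$ and $G$ has nilpotency class at least $3$. If $G$ has coclass $2$, then $G$ does not satisfy $Z(\mathrm{Inn}(G))=\mathrm{Aut}_c^{Z}(G)<\mathrm{Aut}_c(G)$ (i.e., it is not the case that $\mathrm{Aut}_c^{Z}(G)$ equals $Z(\mathrm{Inn}(G))$ and is a proper subgroup of $\mathrm{Aut}_c(G)$).
   Context: $G'$ is the commutator subgroup and $Z(G)$ the center of $G$. $\mathrm{Inn}(G)$ is the group of inner automorphisms of $G$. An automorphism $\alpha$ of $G$ is central if $x^{-1}\alpha(x)\in Z(G)$ for all $x\in G$ (equivalently, it commutes with all inner automorphisms); $\mathrm{Aut}_c(G)$ denotes the group of all central automorphisms of $G$, and $\mathrm{Aut}_c^{Z}(G)$ the subgroup of central automorphisms fixing every element of $Z(G)$. A group of order $p^n$ and nilpotency class $c$ has coclass $n-c$. *)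

From mathcomp Require Import all_boot all_fingroup all_solvable.
Set Implicit Arguments. Unset Strict Implicit. Unset Printing Implicit Defensive.
Local Open Scope group_scope.

(* Inn(G): the group of inner automorphisms x |-> x ^ g (g in G), as
   permutations of gT (identity outside G, like all elements of Aut G). *)
Definition Inn (gT : finGroupType) (G : {group gT}) : {set {perm gT}} :=
  conj_aut G @* G.

Definition Autc (gT : finGroupType) (G : {set gT}) : {set {perm gT}} :=
  [set a in Aut G | [forall x in G, x^-1 * a x \in 'Z(G)]].

Definition AutcZ (gT : finGroupType) (G : {set gT}) : {set {perm gT}} :=
  [set a in Autc G | [forall z in 'Z(G), a z == z]].

Definition coclass (p : nat) (gT : finGroupType) (G : {set gT}) : nat :=
  logn p #|G| - nil_class G.

(* Suppose Z(Inn G) = Aut_c^Z(G); only this equality is needed.  Since G' :&: Z(G)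
   is a nontrivial proper subgroup of Z(G), |Z(G)| >= p^2, and as Inn G ~ G/Z(G)
   has class c - 1, its central quotient has order at least p^(c-1); coclass 2
   then leaves |Z(Inn G)| <= p.  Every maximal subgroup M containing Z(G) carries
   the central automorphism x |-> x f(x), where f : G -> G/M ~ C_p -> Z(G); it is
   nontrivial, fixes M pointwise and lies in Aut_c^Z(G) = Z(Inn G).  For two
   distinct such subgroups M1, M2 the first automorphism is a power of the second,
   so it fixes M1 and M2, which generate G: it is trivial, a contradiction. *)

From mathcomp Require Import all_boot all_fingroup all_solvable zify.
Set Implicit Arguments. Unset Strict Implicit. Unset Printing Implicit Defensive.
Local Open Scope group_scope.

Lemma sub_cycle_pgroup (p : nat) (gT : finGroupType) (H : {group gT}) a :
  p.-group H -> logn p #|H| <= 1 -> a \in H -> a != 1 -> H \subset <[a]>.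
Proof.
move=> pH logH Ha nta; have sAH : <[a]> \subset H by rewrite cycle_subG.
have ntA : <[a]> != 1 by rewrite cycle_eq1.
have [p_pr _ [k oA]] := pgroup_pdiv (pgroupS sAH pH) ntA.
rewrite -(geq_leqif (subset_leqif_card sAH)) oA (card_pgroup pH).
exact: leq_trans (leq_pexp2l (prime_gt0 p_pr) logH) (leq_pexp2l (prime_gt0 p_pr) _).
Qed.

Lemma logn_card_quotient (p : nat) (gT : finGroupType) (G H : {group gT}) :
  H <| G -> logn p #|G / H| = logn p #|G| - logn p #|H|.
Proof. by case/andP=> sHG nHG; rewrite card_quotient // -divgS // logn_div ?cardSg. Qed.

Lemma nil_class_le_logn_center_factor (p : nat) (gT : finGroupType) (G : {group gT}) :
  p.-group G -> 1 < nil_class G -> nil_class G <= logn p #|G / 'Z(G)|.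
Proof.
move=> pG c_gt1; set R := G / 'Z(G).
have pR : p.-group R := quotient_pgroup _ pG.
have ncycR : ~~ cyclic R.
  apply: contraL (c_gt1) => /cyclic_center_factor_abelian.
  by rewrite -nil_class1 -ltnNge.
have logR_gt1 : 1 < logn p #|R|.
  rewrite ltnNge; apply: contra ncycR => logR.
  have [-> | /trivgPn[a Ra nta]] := eqVneq (R : {set _}) 1; first exact: cyclic1.
  exact: cyclicS (sub_cycle_pgroup pR logR Ra nta) (cycle_cyclic a).
have := nil_class_pgroup pR.
rewrite nil_class_quotient_center ?(pgroup_nil pG) // (maxn_idPr _) -?subn1 ?subn_gt0 //.
by rewrite leq_sub2rE // ltnW.
Qed.

Lemma Inn_isog_center_factor (gT : finGroupType) (G : {group gT}) :
  G / 'Z(G) \isog Inn G.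
Proof. by have := first_isog_loc (conj_aut_morphism G) (normG G); rewrite ker_conj_aut. Qed.

Lemma logn_center_Inn (p : nat) (gT : finGroupType) (G : {group gT}) :
  p.-group G -> 2 < nil_class G ->
  logn p #|'Z(Inn G)| + logn p #|'Z(G)| + (nil_class G).-1 <= logn p #|G|.
Proof.
move=> pG c_gt2; set Q := G / 'Z(G).
have pQ : p.-group Q := quotient_pgroup _ pG.
have cQ : nil_class Q = (nil_class G).-1 by rewrite nil_class_quotient_center ?(pgroup_nil pG).
have ZQ : #|'Z(Inn G)| = #|'Z(Q)|.
  by rewrite (card_isog (isog_center (Inn_isog_center_factor G))).
have logQ := logn_card_quotient p (center_normal G).
have logRQ := logn_card_quotient p (center_normal Q).
have le_cR : nil_class Q <= logn p #|Q / 'Z(Q)|.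
  by apply: nil_class_le_logn_center_factor; rewrite // cQ -subn1 ltn_subRL.
have le_ZG := dvdn_leq_log p (cardG_gt0 G) (cardSg (center_sub G)).
have le_ZQ := dvdn_leq_log p (cardG_gt0 Q) (cardSg (center_sub Q)).
rewrite cQ logRQ logQ in le_cR; rewrite logQ in le_ZQ.
rewrite (leq_subRL _ le_ZQ) (leq_subRL _ le_ZG) addnCA addnA in le_cR.
by rewrite ZQ.
Qed.

Lemma logn_center_gt1 (p : nat) (gT : finGroupType) (G : {group gT}) :
  p.-group G -> ~~ abelian G -> ~~ ('Z(G) \subset G^`(1)) -> 1 < logn p #|'Z(G)|.
Proof.
move=> pG nabG nsZG'; set D := G^`(1) :&: 'Z(G).
have ntD : D != 1.
  apply: meet_center_nil (pgroup_nil pG) (der_normal 1 G) _.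
  by apply: contra nabG => /eqP/derG1P.
have prDZ : D \proper 'Z(G).
  by rewrite properEneq subsetIr andbT; apply: contraNneq nsZG' => <-; apply: subsetIl.
have pZ : p.-group 'Z(G) := pgroupS (center_sub G) pG.
have [p_pr _ [m oD]] := pgroup_pdiv (pgroupS (proper_sub prDZ) pZ) ntD.
have := proper_card prDZ; rewrite oD {1}(card_pgroup pZ) (ltn_exp2l _ _ (prime_gt1 p_pr)).
exact: leq_ltn_trans (ltn0Sn m).
Qed.

Lemma maximal_pair_subG (gT : finGroupType) (G M1 M2 H : {group gT}) :
  maximal M1 G -> maximal M2 G -> M1 :!=: M2 ->
  M1 \subset H -> M2 \subset H -> H \subset G -> H :=: G.
Proof.
move=> maxM1 maxM2 neqM sM1H sM2H /eqVproper[] // prHG.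
have [_ /(_ H prHG sM1H) eqHM1] := maxgroupP maxM1.
have [_ /(_ H prHG sM2H) eqHM2] := maxgroupP maxM2.
by rewrite -eqHM1 -eqHM2 eqxx in neqM.
Qed.

Lemma maximal_pair_over_center (gT : finGroupType) (G : {group gT}) :
  ~~ abelian G -> exists M1 M2 : {group gT},
    [/\ maximal M1 G, maximal M2 G, 'Z(G) \subset M1, 'Z(G) \subset M2 & M1 :!=: M2].
Proof.
move=> nabG.
have maximal_over (H : {group gT}) : H \subset G -> abelian H ->
    exists2 M : {group gT}, maximal M G & H \subset M.
  by move=> sHG abH; case: (maximal_exists sHG) => // eqHG; rewrite -eqHG abH in nabG.
have [M1 maxM1 sZM1] := maximal_over _ (center_sub G) (center_abelian G).
have [_ [t Gt notM1t]] := properP (maxgroupp maxM1).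
have sTZG : <[t]> <*> 'Z(G) \subset G by rewrite join_subG cycle_subG Gt center_sub.
have abTZ : abelian (<[t]> <*> 'Z(G)).
  rewrite abelianY cycle_abelian center_abelian /=.
  by rewrite (subset_trans (subsetIr G 'C(G))) // centS ?cycle_subG.
have [M2 maxM2 sTZM2] := maximal_over _ sTZG abTZ.
exists M1, M2; split=> //; first exact: subset_trans (joing_subr _ _) sTZM2.
apply: contraNneq notM1t => ->.
by rewrite (subsetP sTZM2) // (subsetP (joing_subl _ _)) ?cycle_id.
Qed.

Lemma Aut_fix_maximal_pair (gT : finGroupType) (G M1 M2 : {group gT}) (a : {perm gT}) :
  a \in Aut G -> maximal M1 G -> maximal M2 G -> M1 :!=: M2 ->
  {in M1, forall x, a x = x} -> {in M2, forall x, a x = x} -> a = 1.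
Proof.
move=> AutGa maxM1 maxM2 neqM fixM1 fixM2.
pose F := 'C_(|[Aut G])[a]%G.
have inF x : (x \in F) = (x \in G) && (a x == x).
  by rewrite /= gacent1E // !inE sub1set inE.
have sub_fix (M : {group gT}) : maximal M G -> {in M, forall x, a x = x} -> M \subset F.
  move=> maxM fixM; have sMG := proper_sub (maxgroupp maxM).
  by apply/subsetP=> x Mx; rewrite inF (subsetP sMG) ?fixM /=.
have fixG : F :=: G.
  apply: maximal_pair_subG maxM1 maxM2 neqM (sub_fix _ maxM1 fixM1) (sub_fix _ maxM2 fixM2) _.
  by apply/subsetP=> x; rewrite inF => /andP[].
apply/permP=> x; rewrite perm1; case: (boolP (x \in G)) => Gx.
  by move: Gx; rewrite -fixG inF => /andP[_ /eqP].
by move: AutGa; rewrite inE => /andP[/out_perm->].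
Qed.

Section CentralTwist.

Variables (gT : finGroupType) (G : {group gT}) (f : gT -> gT).
Hypotheses (fM : {in G &, {morph f : x y / x * y}})
  (fG : {in G, forall x, f x \in 'Z(G)}) (fZ : {in 'Z(G), forall z, f z = 1}).

Lemma central_twist_AutcZ :
  exists2 a, a \in AutcZ G & {in G, forall x, a x = x * f x}.
Proof.
have sZG := center_sub G.
have twistM : morphic G (fun x => x * f x).
  apply/morphicP=> x y Gx Gy; rewrite fM // !mulgA; congr (_ * _).
  by rewrite -!mulgA (centerC Gy (fG Gx)).
have inj_twist : 'injm (morphm twistM).
  apply/subsetP=> x /morphpreP[Gx /set1P x_f1].
  have {}x_f1 : x * f x = 1 := x_f1.
  have Zx : x \in 'Z(G) by rewrite -(mulgK (f x) x) x_f1 mul1g groupV fG.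
  by apply/set1P; rewrite -[RHS]x_f1 fZ ?mulg1.
have im_twist : morphm twistM @* G = G.
  apply/eqP; rewrite eqEcard card_injm // leqnn andbT.
  by apply/subsetP=> _ /morphimP[x _ Gx ->]; exact: groupM Gx (subsetP sZG _ (fG Gx)).
have aE : {in G, forall x, aut inj_twist im_twist x = x * f x}.
  by move=> x Gx; rewrite autE.
exists (aut inj_twist im_twist) => //.
rewrite inE; apply/andP; split; first rewrite inE Aut_aut /=.
  by apply/forall_inP=> x Gx; rewrite aE // mulKg fG.
by apply/forall_inP=> z Zz; rewrite aE ?(subsetP sZG) // fZ ?mulg1.
Qed.

End CentralTwist.

Lemma morph_index_prime_to_cycle (p : nat) (gT : finGroupType) (G M : {group gT}) t z :
  prime p -> M <| G -> #|G : M| = p -> t \in G -> t \notin M -> #[z] = p ->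
  exists f : gT -> gT, [/\ {in G &, {morph f : x y / x * y}},
    {in G, forall x, f x \in <[z]>}, {in M, forall m, f m = 1} & f t = z].
Proof.
move=> p_pr /andP[sMG nMG] iMG Gt notMt oz.
have GMt : coset M t \in G / M by apply: mem_quotient.
have ot : #[coset M t] = p.
  apply/(prime_nt_dvdP p_pr); last by rewrite -iMG -card_quotient ?order_dvdG.
  apply: contraNneq notMt => /eqP; rewrite order_eq1 => /eqP.
  exact/coset_idr/(subsetP nMG).
have defGM : G / M = <[coset M t]>.
  by apply/eqP; rewrite eq_sym eqEcard cycle_subG GMt -orderE ot card_quotient // iMG leqnn.
have cosetG x : x \in G -> coset M x \in <[coset M t]>.
  by move=> Gx; rewrite -defGM mem_quotient.
have dvd_zt : #[z] %| #[coset M t] by rewrite oz ot.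
exists (fun x => eltm dvd_zt (coset M x)); split.
- by move=> x y Gx Gy /=; rewrite morphM ?(subsetP nMG) // morphM ?cosetG.
- by move=> x /cosetG/cycleP[i ->]; rewrite eltmE mem_cycle.
- by move=> m Mm; rewrite /= (coset_id Mm) morph1.
- exact: eltm_id.
Qed.

Lemma AutcZ_fixing_index_prime (p : nat) (gT : finGroupType) (G M : {group gT}) z :
  prime p -> M <| G -> #|G : M| = p -> 'Z(G) \subset M -> z \in 'Z(G) -> #[z] = p ->
  exists2 a, a \in AutcZ G & a != 1 /\ {in M, forall x, a x = x}.
Proof.
move=> p_pr nsMG iMG sZM Zz oz.
have [t Gt notMt] : exists2 t, t \in G & t \notin M.
  by apply/subsetPn; rewrite -indexg_eq1 iMG gtn_eqF ?prime_gt1.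
have [f [fM fz f1 ft]] := morph_index_prime_to_cycle p_pr nsMG iMG Gt notMt oz.
have fZ : {in G, forall x, f x \in 'Z(G)}.
  by move=> x /fz; apply: subsetP; rewrite cycle_subG.
have [a AutcZa aE] := central_twist_AutcZ fM fZ (sub_in1 (subsetP sZM) f1).
exists a => //; split=> [|x Mx]; last by rewrite aE ?f1 ?mulg1 ?(subsetP (normal_sub nsMG)).
have : a t != t by rewrite aE // ft -{2}[t]mulg1 (can_eq (mulKg t)) -order_gt1 oz prime_gt1.
by apply: contraNneq => ->; rewrite perm1.
Qed.

Theorem lemma2p2 (p : nat) (gT : finGroupType) (G : {group gT}) :
  prime p -> p.-group G ->
  ~~ ('Z(G) \subset G^`(1)) ->
  3 <= nil_class G ->
  coclass p G = 2 ->
  ~ ('Z(Inn G) = AutcZ G /\ AutcZ G \proper Autc G).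
Proof.
move=> p_pr pG nsZG' c_ge3 coclass2 [eqZ _].
have nabG : ~~ abelian G by rewrite -nil_class1 -ltnNge ltnW.
have logG : logn p #|G| = nil_class G + 2.
  rewrite /coclass in coclass2.
  by rewrite -coclass2 addnC subnK // ltnW // -subn_gt0 coclass2.
have logZ := logn_center_gt1 pG nabG nsZG'.
have logZInn : logn p #|'Z(Inn G)| <= 1.
  by have := logn_center_Inn pG c_ge3; rewrite logG; lia.
have p_dvd_Z : p %| #|'Z(G)| by rewrite -[p]expn1 pfactor_dvdn // ltnW.
have [z Zz oz] := Cauchy p_pr p_dvd_Z.
have fixing_aut (M : {group gT}) : maximal M G -> 'Z(G) \subset M ->
    exists2 a, a \in 'Z(Inn G) & a != 1 /\ {in M, forall x, a x = x}.
  move=> maxM sZM; rewrite eqZ.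
  exact: AutcZ_fixing_index_prime p_pr (p_maximal_normal pG maxM)
           (p_maximal_index pG maxM) sZM Zz oz.
have [M1 [M2 [maxM1 maxM2 sZM1 sZM2 neqM]]] := maximal_pair_over_center nabG.
have [a1 Za1 [nta1 fixM1]] := fixing_aut M1 maxM1 sZM1.
have [a2 Za2 [nta2 fixM2]] := fixing_aut M2 maxM2 sZM2.
have pZInn : p.-group 'Z(Inn G) := pgroupS (center_sub _) (morphim_pgroup _ pG).
have /cycleP[k a1E] := subsetP (sub_cycle_pgroup pZInn logZInn Za2 nta2) a1 Za1.
apply/(negP nta1)/eqP; apply: Aut_fix_maximal_pair maxM1 maxM2 neqM fixM1 _.
  exact: subsetP (Aut_conj_aut G G) a1 (subsetP (center_sub _) a1 Za1).
by move=> x M2x; rewrite a1E permX_fix ?fixM2.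
Qed.
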